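(* (1) Every instance of the schemes $\curlyvee_\Box$ and $\curlyvee_\Diamond$ is provable in $\mathcal{H}\mathsf{CN4K}^\pm\oplus\{\Join_\Box,\Join_\Diamond\}$, and every instance of the schemes $\pm_\Box$ and $\pm_\Diamond$ is provable in $\mathcal{H}\mathsf{CN4K}^\curlyvee\oplus\{\Join_\Box,\Join_\Diamond\}$. (2) In the calculus $\mathcal{H}\mathsf{CN4K}\oplus\{\pm_\Box,\pm_\Diamond,\curlyvee_\Box,\curlyvee_\Diamond\}$, for a propositional variable $p$, neither $\Box p\leftrightarrow{\sim}\Diamond{\sim}p$ (an instance of $\Join_\Box$) nor $\Diamond p\leftrightarrow{\sim}\Box{\sim}p$ (an instance of $\Join_\Diamond$) is provable.
   Context: Fix a countable set $\mathsf{Prop}$ of propositional variables. The language $\mathcal{L}$ is given by the grammar $\phi::=p\mid{\sim}\phi\mid(\phi\wedge\phi)\mid(\phi\vee\phi)\mid(\phi\to\phi)\mid\Box\phi\mid\Diamond\phi$ with $p\in\mathsf{Prop}$. $\phi\leftrightarrow\chi$ abbreviates $(\phi\to\chi)\wedge(\chi\to\phi)$. $\mathcal{H}\mathsf{N4}$ has as axioms all $\mathcal{L}$-instances of: $\phi\to(\chi\to\phi)$; $(\phi\to(\chi\to\psi))\to((\phi\to\chi)\to(\phi\to\psi))$; $\phi\wedge\chi\to\phi$; $\phi\wedge\chi\to\chi$; $\phi\to(\chi\to\phi\wedge\chi)$; $\phi\to\phi\vee\chi$; $\chi\to\phi\vee\chi$; $(\phi\to\psi)\to((\chi\to\psi)\to(\phi\vee\chi\to\psi))$;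 ${\sim}{\sim}\phi\leftrightarrow\phi$; ${\sim}(\phi\wedge\chi)\leftrightarrow({\sim}\phi\vee{\sim}\chi)$; ${\sim}(\phi\vee\chi)\leftrightarrow({\sim}\phi\wedge{\sim}\chi)$; ${\sim}(\phi\to\chi)\leftrightarrow(\phi\wedge{\sim}\chi)$; and modus ponens. Further schemes: $\top_\Box$: $\Box(\phi\to\phi)$; $\top_\Diamond$: ${\sim}\Diamond{\sim}(\phi\to\phi)$; $\wedge_\Box$: $(\Box\phi\wedge\Box\chi)\to\Box(\phi\wedge\chi)$; $\wedge_\Diamond$: $({\sim}\Diamond\phi\wedge{\sim}\Diamond\chi)\to{\sim}\Diamond(\phi\vee\chi)$; $\pm_\Box$: $\Box(\phi\to\chi)\to(\Diamond\phi\to\Diamond\chi)$; $\pm_\Diamond$: ${\sim}\Diamond{\sim}({\sim}\phi\to{\sim}\chi)\to({\sim}\Box\phi\to{\sim}\Box\chi)$; $\curlyvee_\Box$: $\Box(\phi\to\chi)\to({\sim}\Box{\sim}\phi\to{\sim}\Box{\sim}\chi)$; $\curlyvee_\Diamond$: ${\sim}\Diamond{\sim}(\phi\to\chi)\to(\Diamond\phi\to\Diamond\chi)$; $\Join_\Box$: $\Box\phi\leftrightarrow{\sim}\Diamond{\sim}\phi$; $\Join_\Diamond$: $\Diamond\phi\leftrightarrow{\sim}\Box{\sim}\phi$. Rules: from $\vdash\phi\to\chi$ infer $\vdash\Box\phi\to\Box\chi$; from $\vdash\phi\to\chi$ infer $\vdash\Diamond\phi\to\Diamond\chi$; from $\vdash{\sim}\phi\to{\sim}\chi$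 infer $\vdash{\sim}\Box\phi\to{\sim}\Box\chi$; from $\vdash{\sim}\phi\to{\sim}\chi$ infer $\vdash{\sim}\Diamond\phi\to{\sim}\Diamond\chi$. $\mathcal{H}\mathsf{CN4K}=\mathcal{H}\mathsf{N4}$ plus $\top_\Box,\wedge_\Box,\top_\Diamond,\wedge_\Diamond$ and the four modal rules. $\mathcal{C}\oplus\mathbf{R}$ denotes calculus $\mathcal{C}$ extended with the axiom schemes/rules in $\mathbf{R}$; $\mathcal{H}\mathsf{CN4K}^\pm=\mathcal{H}\mathsf{CN4K}\oplus\{\pm_\Box,\pm_\Diamond\}$, $\mathcal{H}\mathsf{CN4K}^\curlyvee=\mathcal{H}\mathsf{CN4K}\oplus\{\curlyvee_\Box,\curlyvee_\Diamond\}$. A formula is provable if it is the last element of a finite sequence of axiom instances and rule consequences of earlier elements. *)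

Inductive form : Type :=
| Var : nat -> form
| Neg : form -> form            (* strong negation ~ *)
| And : form -> form -> form
| Or  : form -> form -> form
| Imp : form -> form -> form
| Box : form -> form
| Dia : form -> form.

Definition Iff (a b : form) : form := And (Imp a b) (Imp b a).

Inductive N4ax : form -> Prop :=
| ax_k  a b   : N4ax (Imp a (Imp b a))
| ax_s  a b c : N4ax (Imp (Imp a (Imp b c)) (Imp (Imp a b) (Imp a c)))
| ax_a1 a b   : N4ax (Imp (And a b) a)
| ax_a2 a b   : N4ax (Imp (And a b) b)
| ax_a3 a b   : N4ax (Imp a (Imp b (And a b)))
| ax_o1 a b   : N4ax (Imp a (Or a b))
| ax_o2 a b   : N4ax (Imp b (Or a b))
| ax_o3 a b c : N4ax (Imp (Imp a c) (Imp (Imp b c) (Imp (Or a b) c)))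
| ax_nn a     : N4ax (Iff (Neg (Neg a)) a)
| ax_na a b   : N4ax (Iff (Neg (And a b)) (Or (Neg a) (Neg b)))
| ax_no a b   : N4ax (Iff (Neg (Or a b)) (And (Neg a) (Neg b)))
| ax_ni a b   : N4ax (Iff (Neg (Imp a b)) (And a (Neg b))).

Definition TopBox (f : form) : Prop := exists a, f = Box (Imp a a).
Definition TopDia (f : form) : Prop := exists a, f = Neg (Dia (Neg (Imp a a))).
Definition WedgeBox (f : form) : Prop :=
  exists a b, f = Imp (And (Box a) (Box b)) (Box (And a b)).
Definition WedgeDia (f : form) : Prop :=
  exists a b, f = Imp (And (Neg (Dia a)) (Neg (Dia b))) (Neg (Dia (Or a b))).
Definition PmBox (f : form) : Prop :=
  exists a b, f = Imp (Box (Imp a b)) (Imp (Dia a) (Dia b)).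
Definition PmDia (f : form) : Prop :=
  exists a b, f = Imp (Neg (Dia (Neg (Imp (Neg a) (Neg b)))))
                      (Imp (Neg (Box a)) (Neg (Box b))).
Definition VeeBox (f : form) : Prop :=
  exists a b, f = Imp (Box (Imp a b)) (Imp (Neg (Box (Neg a))) (Neg (Box (Neg b)))).
Definition VeeDia (f : form) : Prop :=
  exists a b, f = Imp (Neg (Dia (Neg (Imp a b)))) (Imp (Dia a) (Dia b)).
Definition JoinBox (f : form) : Prop :=
  exists a, f = Iff (Box a) (Neg (Dia (Neg a))).
Definition JoinDia (f : form) : Prop :=
  exists a, f = Iff (Dia a) (Neg (Box (Neg a))).

Inductive prv (X : form -> Prop) : form -> Prop :=
| pr_n4 f : N4ax f -> prv X f
| pr_topbox f : TopBox f -> prv X f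
| pr_wedgebox f : WedgeBox f -> prv X f
| pr_topdia f : TopDia f -> prv X f
| pr_wedgedia f : WedgeDia f -> prv X f
| pr_extra f : X f -> prv X f
| pr_mp a b : prv X a -> prv X (Imp a b) -> prv X b
| pr_rbox a b : prv X (Imp a b) -> prv X (Imp (Box a) (Box b))
| pr_rdia a b : prv X (Imp a b) -> prv X (Imp (Dia a) (Dia b))
| pr_rnbox a b : prv X (Imp (Neg a) (Neg b)) ->
                 prv X (Imp (Neg (Box a)) (Neg (Box b)))
| pr_rndia a b : prv X (Imp (Neg a) (Neg b)) ->
                 prv X (Imp (Neg (Dia a)) (Neg (Dia b))).

Definition X_pm_join (f : form) : Prop :=
  PmBox f \/ PmDia f \/ JoinBox f \/ JoinDia f.
Definition X_vee_join (f : form) : Prop :=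
  VeeBox f \/ VeeDia f \/ JoinBox f \/ JoinDia f.
Definition X_pm_vee (f : form) : Prop :=
  PmBox f \/ PmDia f \/ VeeBox f \/ VeeDia f.

(* Over the other modal axioms, ⋈□ and ⋈◇ translate between □ and ¬◇¬ (resp. ◇ and
   ¬□¬), and under this translation the ⋎-schemes are exactly the ±-schemes, up to
   a double strong negation inside ¬□.

   For the independence, read formulas in the two-valued N4 semantics of pairs
   (verified, falsified), with □φ always verified and never falsified, and ◇φ always
   verified and falsified exactly when φ is. Every axiom and rule of
   HCN4K ⊕ {±□, ±◇, ⋎□, ⋎◇} preserves verification, since ¬□φ is never verified and
   ¬◇φ is verified exactly when ¬φ is. But when p is neither verified nor falsified,
   □p and ◇p are verified while ¬◇¬p and ¬□¬p are not. *)

From Stdlib Require Import Bool.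

Section Hilbert.
Variable X : form -> Prop.

Lemma prv_iff_l a b : prv X (Iff a b) -> prv X (Imp a b).
Proof. intro H. exact (pr_mp _ _ _ H (pr_n4 _ _ (ax_a1 _ _))). Qed.

Lemma prv_iff_r a b : prv X (Iff a b) -> prv X (Imp b a).
Proof. intro H. exact (pr_mp _ _ _ H (pr_n4 _ _ (ax_a2 _ _))). Qed.

Lemma prv_imp_postcomp a b c :
  prv X (Imp b c) -> prv X (Imp (Imp a b) (Imp a c)).
Proof.
  intro H. apply (pr_mp _ (Imp a (Imp b c))).
  - exact (pr_mp _ _ _ H (pr_n4 _ _ (ax_k _ _))).
  - apply pr_n4, ax_s.
Qed.

Lemma prv_imp_trans a b c :
  prv X (Imp a b) -> prv X (Imp b c) -> prv X (Imp a c).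
Proof. intros Hab Hbc. exact (pr_mp _ _ _ Hab (prv_imp_postcomp a _ _ Hbc)). Qed.

Lemma prv_imp_precomp a b c :
  prv X (Imp a b) -> prv X (Imp (Imp b c) (Imp a c)).
Proof.
  intro H.
  assert (Hcomp : prv X (Imp (Imp b c) (Imp (Imp a b) (Imp a c)))).
  { apply (prv_imp_trans _ (Imp a (Imp b c))); apply pr_n4; [apply ax_k | apply ax_s]. }
  apply (pr_mp _ (Imp (Imp b c) (Imp a b))).
  - exact (pr_mp _ _ _ H (pr_n4 _ _ (ax_k _ _))).
  - exact (pr_mp _ _ _ Hcomp (pr_n4 _ _ (ax_s _ _ _))).
Qed.

Lemma prv_imp_congr p q r q' r' :
  prv X (Imp p (Imp q r)) -> prv X (Imp q' q) -> prv X (Imp r r') ->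
  prv X (Imp p (Imp q' r')).
Proof.
  intros H Hq Hr. apply (prv_imp_trans _ _ _ H).
  apply (prv_imp_trans _ (Imp q' r)).
  - exact (prv_imp_precomp _ _ _ Hq).
  - exact (prv_imp_postcomp _ _ _ Hr).
Qed.

Lemma prv_vee_box_of_pm_box_join_dia :
  (forall f, PmBox f -> X f) -> (forall f, JoinDia f -> X f) ->
  forall f, VeeBox f -> prv X f.
Proof.
  intros Hpm Hjoin f [a [b ->]].
  apply (prv_imp_congr _ (Dia a) (Dia b)).
  - apply pr_extra, Hpm. now exists a, b.
  - apply prv_iff_r, pr_extra, Hjoin. now exists a.
  - apply prv_iff_l, pr_extra, Hjoin. now exists b.
Qed.

Lemma prv_vee_dia_of_pm_box_join_box :
  (forall f, PmBox f -> X f) -> (forall f, JoinBox f -> X f) ->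
  forall f, VeeDia f -> prv X f.
Proof.
  intros Hpm Hjoin f [a [b ->]].
  apply (prv_imp_trans _ (Box (Imp a b))).
  - apply prv_iff_r, pr_extra, Hjoin. now exists (Imp a b).
  - apply pr_extra, Hpm. now exists a, b.
Qed.

Lemma prv_pm_box_of_vee_dia_join_box :
  (forall f, VeeDia f -> X f) -> (forall f, JoinBox f -> X f) ->
  forall f, PmBox f -> prv X f.
Proof.
  intros Hvee Hjoin f [a [b ->]].
  apply (prv_imp_trans _ (Neg (Dia (Neg (Imp a b))))).
  - apply prv_iff_l, pr_extra, Hjoin. now exists (Imp a b).
  - apply pr_extra, Hvee. now exists a, b.
Qed.

Lemma prv_pm_dia_of_vee_box_join_box :
  (forall f, VeeBox f -> X f) -> (forall f, JoinBox f -> X f) ->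
  forall f, PmDia f -> prv X f.
Proof.
  intros Hvee Hjoin f [a [b ->]].
  apply (prv_imp_trans _ (Box (Imp (Neg a) (Neg b)))).
  - apply prv_iff_r, pr_extra, Hjoin. now exists (Imp (Neg a) (Neg b)).
  - apply (prv_imp_congr _ (Neg (Box (Neg (Neg a)))) (Neg (Box (Neg (Neg b))))).
    + apply pr_extra, Hvee. now exists (Neg a), (Neg b).
    + apply pr_rnbox, prv_iff_r, pr_n4, ax_nn.
    + apply pr_rnbox, prv_iff_l, pr_n4, ax_nn.
Qed.

End Hilbert.

Fixpoint verified (e : nat -> bool) (f : form) : bool :=
  match f with
  | Var n => e n
  | Neg a => falsified e a
  | And a b => verified e a && verified e b
  | Or a b => verified e a || verified e b
  | Imp a b => implb (verified e a) (verified e b)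
  | Box _ => true
  | Dia _ => true
  end
with falsified (e : nat -> bool) (f : form) : bool :=
  match f with
  | Var _ => false
  | Neg a => verified e a
  | And a b => falsified e a || falsified e b
  | Or a b => falsified e a && falsified e b
  | Imp a b => verified e a && falsified e b
  | Box _ => false
  | Dia a => falsified e a
  end.

Ltac bool_cases e :=
  repeat match goal with
         | |- context [verified e ?x] => destruct (verified e x)
         | |- context [falsified e ?x] => destruct (falsified e x)
         end.

Lemma verified_of_N4ax e f : N4ax f -> verified e f = true.
Proof. destruct 1; simpl; bool_cases e; reflexivity. Qed.

Lemma verified_of_prv_pm_vee f : prv X_pm_vee f -> forall e, verified e f = true.
Proof.
  induction 1 as [f Hax | f [a ->] | f [a [b ->]] | f [a ->] | f [a [b ->]]
                 | f Hx | a b _ IHa _ IHab | | | | a b _ IH]; intro e; simpl.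
  - exact (verified_of_N4ax e f Hax).
  - bool_cases e; reflexivity.
  - reflexivity.
  - bool_cases e; reflexivity.
  - bool_cases e; reflexivity.
  - destruct Hx as [[a [b ->]] | [[a [b ->]] | [[a [b ->]] | [a [b ->]]]]];
      simpl; bool_cases e; reflexivity.
  - specialize (IHab e); simpl in IHab. now rewrite (IHa e) in IHab.
  - reflexivity.
  - reflexivity.
  - reflexivity.
  - exact (IH e).
Qed.

Theorem theorem3 :
  ((forall f, VeeBox f \/ VeeDia f -> prv X_pm_join f) /\
   (forall f, PmBox f \/ PmDia f -> prv X_vee_join f)) /\
  (forall p : nat,
     ~ prv X_pm_vee (Iff (Box (Var p)) (Neg (Dia (Neg (Var p))))) /\
     ~ prv X_pm_vee (Iff (Dia (Var p)) (Neg (Box (Neg (Var p)))))).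
Proof.
  unfold X_pm_join, X_vee_join.
  split; [split|].
  - intros f [Hf | Hf].
    + apply prv_vee_box_of_pm_box_join_dia; auto.
    + apply prv_vee_dia_of_pm_box_join_box; auto.
  - intros f [Hf | Hf].
    + apply prv_pm_box_of_vee_dia_join_box; auto.
    + apply prv_pm_dia_of_vee_box_join_box; auto.
  - intro p; split; intro H;
      discriminate (verified_of_prv_pm_vee _ H (fun _ => false)).
Qed.
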